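(* For every integer $k\geq 3$ there exists a tree $T$ of order $n$ such that $\mathrm{rad}(T)>k$ and $\gamma_{B_k}(T)=\left\lceil\frac{k+2}{k+1}\cdot\frac{n}{3}\right\rceil$.
   Context: $d(u,v)$ denotes the distance in the graph; $\mathrm{rad}(T)$ is the radius. For a connected graph $G$ and an integer $k\ge 1$, a function $f\colon V(G)\to\{0,1,\dots,k\}$ is a dominating $k$-broadcast on $G$ if for every $u\in V(G)$ there is a vertex $v$ with $f(v)\geq 1$ and $d(u,v)\leq f(v)$. Its cost is $\omega(f)=\sum_{u\in V(G)}f(u)$, and the dominating $k$-broadcast number $\gamma_{B_k}(G)$ is the minimum cost of a dominating $k$-broadcast on $G$. *)

From mathcomp Require Import all_boot all_order.
Set Implicit Arguments. Unset Strict Implicit. Unset Printing Implicit Defensive.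

Section Graphs.
Variable T : finType.
Variable e : rel T.

Definition simple_graph : Prop := symmetric e /\ irreflexive e.

Definition edges : {set {set T}} := [set [set x; y] | x in T, y in T & e x y].

Definition connected_graph : Prop := forall u v : T, connect e u v.

Definition is_tree : Prop :=
  [/\ simple_graph, 0 < #|T|, connected_graph & #|edges| = #|T| - 1].

Fixpoint ball (m : nat) (u : T) : {set T} :=
  match m with
  | 0 => [set u]
  | m'.+1 => ball m' u :|: [set y | [exists x in ball m' u, e x y]]
  end.

(* graph distance: least m with v in ball m u (= #|T| if unreachable) *)
Definition dist (u v : T) : nat := find (fun m => v \in ball m u) (iota 0 #|T|).

Definition ecc (u : T) : nat := \max_(v : T) dist u v.

Definition rad : nat := \big[minn/#|T|]_(u : T) ecc u.

Definition dominating_broadcast (k : nat) (f : {ffun T -> 'I_k.+1}) : bool :=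
  [forall u : T, exists v : T, (1 <= f v) && (dist u v <= f v)].

Definition bcost (k : nat) (f : {ffun T -> 'I_k.+1}) : nat := \sum_(v : T) (f v : nat).

(* dominating k-broadcast number (minimum cost); default #|T| is never
   smaller than the minimum for connected graphs (all-ones broadcast) *)
Definition gammaB (k : nat) : nat :=
  \big[minn/#|T|]_(f : {ffun T -> 'I_k.+1} | dominating_broadcast f) bcost f.

End Graphs.

Definition ceil_div (a b : nat) : nat := (a + b - 1) %/ b.

From mathcomp Require Import all_boot all_order zify.
Set Implicit Arguments. Unset Strict Implicit. Unset Printing Implicit Defensive.
Import Order.TTheory.

(* The tree is a caterpillar on n = 3k+3 vertices: a spine path 0 - 1 - ... - 2k+2 with one
   pendant leaf on each of the spine vertices 2, 4, ..., 2k.  It is given by a parent function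
   that decreases vertex numbers, hence it is a tree, and the distance between two vertices is
   the spine distance of their feet plus their heights (1 for a pendant leaf, 0 otherwise):
   this closed form vanishes exactly on the diagonal, grows by at most one along an edge and
   can always be decreased by one along an edge.
   Every vertex is at distance > k from one end of the spine, so rad > k.  Broadcasting k from
   the middle vertex k+1 and 1 from both ends of the spine dominates at cost k+2.  Conversely,
   list the k+2 leaves along the spine: two leaves g apart in this list are at distance at
   least 2g+1, except the two ends of the spine, which are 2k+2 apart.  Hence a vertex
   broadcasting with strength s <= k reaches at most s leaves, and summing over the
   broadcasting vertices, every dominating k-broadcast costs at least k+2, which is
   ceil((k+2)/(k+1) * n/3). *)

Lemma ceil_divMl a b : 0 < b -> ceil_div (a * b) b = a.
Proof.
by move=> b_gt0; rewrite /ceil_div -addnBA // divnMDl // divn_small ?addn0 // subn1 ltn_predL.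
Qed.

Lemma sum_ord_pred1 n c : c < n -> \sum_(v < n) (v == c :> nat) = 1.
Proof.
move=> lt_cn; rewrite (bigD1 (Ordinal lt_cn)) //= eqxx big1 // => v.
by rewrite -val_eqE /= => /negbTE ->.
Qed.

Lemma find_leq_iota d a m :
  a <= d < a + m -> find (fun i => d <= i) (iota a m) = d - a.
Proof.
elim: m a => [|m IH] a /= bounds; first lia.
case: leqP => [le_da|lt_ad]; first lia.
rewrite IH; lia.
Qed.

Lemma card_le_window (T : finType) (S : {set T}) (g : T -> nat) s :
  {in S &, injective g} -> {in S &, forall i j, g i < g j + s} -> #|S| <= s.
Proof.
move=> g_inj g_close; have [->|[i0 Si0]] := set_0Vmem S; first by rewrite cards0.
case: (arg_minnP g Si0) => m Sm m_min.
rewrite cardE -(size_map g) -(size_iota (g m) s); apply: uniq_leq_size.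
  by rewrite map_inj_in_uniq ?enum_uniq // => i j; rewrite !mem_enum; apply: g_inj.
move=> x /mapP[i]; rewrite mem_enum => Si ->.
by rewrite mem_iota m_min //= g_close.
Qed.

Section ParentTree.
Variables (T : finType) (root : T) (par : T -> T) (rank : T -> nat).
Hypothesis rank_par : forall v, v != root -> rank (par v) < rank v.

Definition parent_rel : rel T :=
  fun x y => ((x != root) && (y == par x)) || ((y != root) && (x == par y)).

Lemma par_neq v : v != root -> par v != v.
Proof. by move=> /rank_par; apply: contraTneq => ->; rewrite ltnn. Qed.

Lemma parent_rel_sym : symmetric parent_rel.
Proof. by move=> x y; rewrite /parent_rel orbC. Qed.

Lemma parent_rel_irr : irreflexive parent_rel.
Proof.
move=> x; rewrite /parent_rel orbb; apply/negbTE; rewrite negb_and negbK.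
by case: (eqVneq x root) => //= /par_neq; rewrite eq_sym.
Qed.

Lemma parent_rel_par v : v != root -> parent_rel v (par v).
Proof. by rewrite /parent_rel => ->; rewrite eqxx. Qed.

Lemma connect_root v : connect parent_rel v root.
Proof.
elim: {v}(rank v).+1 {-2}v (ltnSn (rank v)) => // r IH v rank_v.
have [-> //|v_root] := eqVneq v root.
apply: connect_trans (connect1 (parent_rel_par v_root)) (IH _ _).
exact: leq_trans (rank_par v_root) _.
Qed.

Lemma edges_parent_rel : edges parent_rel = [set [set v; par v] | v in [set~ root]].
Proof.
apply/setP => A; apply/imset2P/imsetP.
  case=> x y _; rewrite inE => /orP[]/andP[x_root /eqP->] ->.
    by exists x; rewrite ?inE.
  by exists y; rewrite ?inE // setUC.
case=> v; rewrite !inE => v_root ->.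
by exists v (par v); rewrite ?inE // /parent_rel v_root eqxx.
Qed.

Lemma card_edges_parent_rel : #|edges parent_rel| = #|T| - 1.
Proof.
rewrite edges_parent_rel card_in_imset ?cardsC1 ?subn1 // => v w.
rewrite !inE => v_root w_root vw.
have : w \in [set v; par v] by rewrite vw !inE eqxx.
have : v \in [set w; par w] by rewrite -vw !inE eqxx.
rewrite !inE => /orP[/eqP-> //|/eqP v_par] /orP[/eqP-> //|/eqP w_par].
move: (rank_par v_root) (rank_par w_root); rewrite -v_par -w_par => lt_wv lt_vw.
by have := ltn_trans lt_wv lt_vw; rewrite ltnn.
Qed.

Lemma parent_rel_tree : is_tree parent_rel.
Proof.
split.
- by split; [exact: parent_rel_sym | exact: parent_rel_irr].
- by apply/card_gt0P; exists root.
- move=> u v; apply: connect_trans (connect_root u) _.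
  by rewrite (sym_connect_sym parent_rel_sym) connect_root.
- exact: card_edges_parent_rel.
Qed.

End ParentTree.

Section DistanceCertificate.
Variables (T : finType) (e : rel T) (D : T -> T -> nat).
Hypothesis D_eq0 : forall u v, (D u v == 0) = (v == u).
Hypothesis D_step : forall u x v, e x v -> D u v <= (D u x).+1.
Hypothesis D_pred : forall u v, 0 < D u v -> exists2 x, e x v & D u x = (D u v).-1.

Lemma ball_certificate m u v : (v \in ball e m u) = (D u v <= m).
Proof.
elim: m v => [|m IH] v /=; first by rewrite in_set1 leqn0 D_eq0.
rewrite in_setU in_set IH; apply/idP/idP.
  case/orP=> [/leqW //|/existsP[x /andP[]]].
  by rewrite IH => Dx /D_step/leq_trans; apply.
rewrite leq_eqVlt ltnS orbC => /orP[-> //|/eqP Dv]; apply/orP; right.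
have [|x xv Dx] := @D_pred u v; first by rewrite Dv.
by apply/existsP; exists x; rewrite IH Dx Dv xv andbT.
Qed.

Hypothesis D_lt_card : forall u v, D u v < #|T|.

Lemma dist_certificate u v : dist e u v = D u v.
Proof.
rewrite /dist (eq_find (a2 := fun m => D u v <= m)) => [|m]; last exact: ball_certificate.
by rewrite find_leq_iota ?subn0 // add0n D_lt_card.
Qed.

End DistanceCertificate.

Lemma rad_gt (T : finType) (e : rel T) k :
  k < #|T| -> (forall u, exists v, k < dist e u v) -> k < rad e.
Proof.
move=> k_lt far; apply: (le_bigmin (T := nat)) => // u _.
by have [v /leq_trans] := far u; apply; apply: leq_bigmax.
Qed.

Section Broadcasts.
Variables (T : finType) (e : rel T) (k : nat).

Lemma gammaB_le_bcost (f : {ffun T -> 'I_k.+1}) :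
  dominating_broadcast e f -> gammaB e k <= bcost f.
Proof. exact: (bigmin_le_cond (T := nat)). Qed.

Variable P : {set T}.
Hypothesis packing :
  forall v s, 0 < s <= k -> #|[set p in P | dist e p v <= s]| <= s.

Lemma bcost_ge_packing (f : {ffun T -> 'I_k.+1}) :
  dominating_broadcast e f -> #|P| <= bcost f.
Proof.
move=> /forallP dom.
pose heard v := [set p in P | (0 < f v) && (dist e p v <= f v)].
have heard_card v : #|heard v| <= f v.
  have [fv0|fv_gt0] := posnP (f v).
    by rewrite fv0 leqn0 cards_eq0; apply/eqP/setP => p; rewrite !inE fv0 /= andbF.
  apply: leq_trans (packing v _); last by rewrite fv_gt0 -ltnS ltn_ord.
  by apply/subset_leq_card/subsetP => p; rewrite !inE fv_gt0.
have heard_cover : #|P| <= \sum_v \sum_(p in P) (p \in heard v).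
  rewrite exchange_big -sum1_card; apply: leq_sum => p pP.
  have [v /andP[fv dv]] := existsP (dom p).
  by rewrite (bigD1 v) //= inE pP fv dv.
apply: leq_trans heard_cover _; apply: leq_sum => v _.
rewrite -big_mkcondr sum1dep_card; apply: leq_trans (heard_card v).
by apply/subset_leq_card/subsetP => p; rewrite inE => /andP[].
Qed.

Lemma gammaB_ge_packing : #|P| <= gammaB e k.
Proof.
apply: (le_bigmin (T := nat)) => [|f]; first exact: max_card.
exact: bcost_ge_packing.
Qed.

End Broadcasts.

Section Caterpillar.
Variable k : nat.

Local Notation N := (3*k+2).+1.

(* Spine vertices are 0, ..., 2k+2; vertex 2k+2+j (1 <= j <= k) is the pendant leaf on 2j. *)
Definition cat_foot (v : nat) : nat := if v < 2*k+3 then v else 2 * (v - (2*k+2)).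
Definition cat_height (v : nat) : nat := if v < 2*k+3 then 0 else 1.
Definition cat_par (v : nat) : nat := if v < 2*k+3 then v.-1 else cat_foot v.
Definition cat_dist (u v : nat) : nat :=
  if u == v then 0
  else (cat_foot u - cat_foot v) + (cat_foot v - cat_foot u) + cat_height u + cat_height v.

(* For a spine vertex v <= cat_foot u, the neighbour of v on the way to u. *)
Definition cat_child_toward (u v : nat) : nat := if v < cat_foot u then v.+1 else u.

Local Ltac cat_lia :=
  rewrite /cat_dist /cat_child_toward /cat_par /cat_foot /cat_height;
  repeat match goal with
  | |- context[if ?a < ?b then _ else _] => case: (ltnP a b)
  | |- context[?a == ?b] => case: eqP
  end; move=> * /=; lia.

Lemma cat_dist_par_bounds u v : u < N -> v < N -> 0 < v ->
  cat_dist u v <= (cat_dist u (cat_par v)).+1 /\ cat_dist u (cat_par v) <= (cat_dist u v).+1.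
Proof. by cat_lia. Qed.

Lemma cat_dist_par_pred u v : u < N -> v < N -> 0 < cat_dist u v ->
  ~~ ((v < 2*k+3) && (v <= cat_foot u)) ->
  0 < v /\ cat_dist u (cat_par v) = (cat_dist u v).-1.
Proof. by cat_lia. Qed.

Lemma cat_dist_child_pred u v : u < N -> v < N -> 0 < cat_dist u v ->
  (v < 2*k+3) && (v <= cat_foot u) ->
  [/\ cat_child_toward u v < N, 0 < cat_child_toward u v,
      cat_par (cat_child_toward u v) = v
    & cat_dist u (cat_child_toward u v) = (cat_dist u v).-1].
Proof. by move=> hu hv hD hc; split; move: hu hv hD hc; cat_lia. Qed.

Local Notation V := 'I_N.

Definition cat_parent (v : V) : V := inord (cat_par v).
Definition caterpillar : rel V := parent_rel ord0 cat_parent.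

Lemma cat_parentE (v : V) : cat_parent v = cat_par v :> nat.
Proof. by rewrite inordK //; move: (ltn_ord v); cat_lia. Qed.

Lemma caterpillarE (x y : V) : caterpillar x y =
  ((x != 0 :> nat) && (y == cat_par x :> nat)) || ((y != 0 :> nat) && (x == cat_par y :> nat)).
Proof. by rewrite /caterpillar /parent_rel -!val_eqE /= !cat_parentE. Qed.

Lemma caterpillar_tree : is_tree caterpillar.
Proof.
apply: (@parent_rel_tree _ _ _ val) => v; rewrite -val_eqE /= cat_parentE.
by move: (ltn_ord v); cat_lia.
Qed.

Lemma cat_dist_eq0 (u v : V) : (cat_dist u v == 0) = (v == u).
Proof.
have [->|neq] := eqVneq u v; first by rewrite /cat_dist !eqxx.
apply/negbTE; rewrite -lt0n.
have {neq} : (u : nat) <> v by apply/eqP.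
by move: (ltn_ord u) (ltn_ord v); cat_lia.
Qed.

Lemma cat_dist_step (u x v : V) : caterpillar x v -> cat_dist u v <= (cat_dist u x).+1.
Proof.
rewrite caterpillarE => /orP[]/andP[]; rewrite -lt0n => pos /eqP->.
  by have [] := cat_dist_par_bounds (ltn_ord u) (ltn_ord x) pos.
by have [] := cat_dist_par_bounds (ltn_ord u) (ltn_ord v) pos.
Qed.

Lemma cat_dist_pred (u v : V) : 0 < cat_dist u v ->
  exists2 x, caterpillar x v & cat_dist u x = (cat_dist u v).-1.
Proof.
move=> Duv; have [toward_child|toward_parent] := boolP ((v < 2*k+3) && (v <= cat_foot u)).
  have [c_lt c_gt0 par_c Dc] := cat_dist_child_pred (ltn_ord u) (ltn_ord v) Duv toward_child.
  exists (inord (cat_child_toward u v)); last by rewrite inordK.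
  have parent_c : cat_parent (inord (cat_child_toward u v)) = v.
    by apply: val_inj; rewrite /= cat_parentE inordK.
  rewrite -[X in caterpillar _ X]parent_c; apply: parent_rel_par.
  by rewrite -val_eqE /= inordK // -lt0n.
have [v_gt0 Dpar] := cat_dist_par_pred (ltn_ord u) (ltn_ord v) Duv toward_parent.
exists (cat_parent v); last by rewrite cat_parentE.
by rewrite /caterpillar parent_rel_sym; apply: parent_rel_par; rewrite -val_eqE /= -lt0n.
Qed.

Lemma dist_caterpillar (u v : V) : dist caterpillar u v = cat_dist u v.
Proof.
apply: (@dist_certificate _ _ (fun u v : V => cat_dist u v)) => {u v} [u v|u x v|u v|u v].
- exact: cat_dist_eq0.
- exact: cat_dist_step.
- exact: cat_dist_pred.
- by rewrite card_ord; move: (ltn_ord u) (ltn_ord v); cat_lia.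
Qed.

Lemma caterpillar_far (u : V) : exists v, k < dist caterpillar u v.
Proof.
have [near_start|near_end] := leqP (cat_foot u) (k+1).
  exists (inord (2*k+2)); rewrite dist_caterpillar inordK; last lia.
  by move: near_start (ltn_ord u); cat_lia.
by exists ord0; rewrite dist_caterpillar /=; move: near_end (ltn_ord u); cat_lia.
Qed.

Lemma rad_caterpillar : k < rad caterpillar.
Proof. by apply: rad_gt => [|u]; [rewrite card_ord; lia | exact: caterpillar_far]. Qed.

Definition cat_leaf (j : nat) : nat :=
  if j == 0 then 0 else if j == k+1 then 2*k+2 else 2*k+2+j.

Definition cat_leaves : {set V} := [set inord (cat_leaf j) | j : 'I_(k+2)].

Lemma cat_leaf_lt j : j < k+2 -> cat_leaf j < N.
Proof. by rewrite /cat_leaf; cat_lia. Qed.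

Lemma card_cat_leaves : #|cat_leaves| = k+2.
Proof.
rewrite card_imset ?card_ord // => i j /(congr1 val) /=.
rewrite !inordK ?cat_leaf_lt // => same_leaf; apply: val_inj.
by move: same_leaf (ltn_ord i) (ltn_ord j); rewrite /cat_leaf; cat_lia.
Qed.

Lemma cat_leaf_window i j v s : i < k+2 -> j < k+2 -> v < N -> 0 < s <= k ->
  cat_dist (cat_leaf i) v <= s -> cat_dist (cat_leaf j) v <= s -> i < j + s.
Proof. by rewrite /cat_leaf; cat_lia. Qed.

Lemma caterpillar_packing (v : V) s : 0 < s <= k ->
  #|[set p in cat_leaves | dist caterpillar p v <= s]| <= s.
Proof.
move=> s_bounds.
pose near := [set j : 'I_(k+2) | dist caterpillar (inord (cat_leaf j)) v <= s].
have near_leaves : [set p in cat_leaves | dist caterpillar p v <= s]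
    \subset [set inord (cat_leaf j) | j : 'I_(k+2) in near].
  apply/subsetP => p; rewrite inE => /andP[/imsetP[j _ ->] dp].
  by apply: imset_f; rewrite inE.
apply: leq_trans (subset_leq_card near_leaves) (leq_trans (leq_imset_card _ _) _).
apply: (@card_le_window _ _ val) => [i j _ _ /val_inj //|i j].
rewrite !inE !dist_caterpillar !inordK ?cat_leaf_lt //.
exact: cat_leaf_window.
Qed.

Definition cat_strength (v : nat) : nat := k * (v == k+1) + (v == 0) + (v == 2*k+2).

Hypothesis k_gt0 : 0 < k.

Definition cat_broadcast : {ffun V -> 'I_k.+1} := [ffun v : V => inord (cat_strength v)].

Lemma cat_broadcastE (v : V) : cat_broadcast v = cat_strength v :> nat.
Proof. by rewrite ffunE inordK // ltnS /cat_strength; cat_lia. Qed.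

Lemma cat_broadcast_dominating : dominating_broadcast caterpillar cat_broadcast.
Proof.
apply/forallP => u; apply/existsP.
have [near_hub|far_hub] := leqP (cat_dist u (k+1)) k.
  exists (inord (k+1)); rewrite cat_broadcastE dist_caterpillar inordK; last lia.
  by apply/andP; split; move: near_hub; rewrite /cat_strength; cat_lia.
exists u; rewrite cat_broadcastE dist_caterpillar.
by apply/andP; split; move: far_hub (ltn_ord u); rewrite /cat_strength; cat_lia.
Qed.

Lemma bcost_cat_broadcast : bcost cat_broadcast = k+2.
Proof.
rewrite /bcost; under eq_bigr do rewrite cat_broadcastE.
by rewrite !big_split -big_distrr /= !sum_ord_pred1 ?muln1 ?addnA //; lia.
Qed.

Lemma gammaB_caterpillar : gammaB caterpillar k = k+2.
Proof.
apply/eqP; rewrite eqn_leq -{1}bcost_cat_broadcast.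
rewrite gammaB_le_bcost ?cat_broadcast_dominating //= -{1}card_cat_leaves.
by apply: gammaB_ge_packing => v s; apply: caterpillar_packing.
Qed.

End Caterpillar.

Theorem proposition3 :
  forall k : nat, 3 <= k ->
  exists (n : nat) (e : rel 'I_n),
    [/\ is_tree e, k < rad e &
        gammaB e k = ceil_div ((k + 2) * n) (3 * (k + 1))].
Proof.
move=> k k_ge3; have k_gt0 : 0 < k by apply: leq_trans k_ge3.
exists (3*k+2).+1, (@caterpillar k); split.
- exact: caterpillar_tree.
- exact: rad_caterpillar.
- rewrite gammaB_caterpillar //; have -> : (3*k+2).+1 = 3 * (k+1) by lia.
  by rewrite ceil_divMl // muln_gt0 addn1.
Qed.
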